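(* For every annotated CQ $(q,E)$ in which $E=(\emptyset,E^-)$ consists of negative examples only, every $\preceq^{\mathrm{cod}}$-repair for $(q,E)$ is a $\preceq^{\mathrm{cod}}$-specialization for $(q,E)$.
   Context: Data examples are pairs $(I,\mathbf a)$ with $I$ a finite instance and $\mathbf a$ a $k$-tuple of its values. A $k$-ary CQ is $q(x_1,\dots,x_k)\text{ :- }\alpha_1,\dots,\alpha_n$ (relational atoms, no constants, each answer variable in some atom). $[\![q]\!]$ is the set of data examples $(I,\mathbf a)$ with $\mathbf a\in q(I)$; $\subseteq$ is query containment. $q$ fits $E=(E^+,E^-)$ iff $E^+\subseteq[\![q]\!]$ and $E^-\cap[\![q]\!]=\emptyset$. $q_1\preceq^{\mathrm{cod}}_q q_2$ iff $[\![q]\!]\oplus[\![q_1]\!]\subseteq[\![q]\!]\oplus[\![q_2]\!]$ ($\oplus$ symmetric difference), $\prec_q$ its strict part. A $\preceq^{\mathrm{cod}}$-repair for $(q,E)$ is a CQ $q'$ fitting $E$ such that no CQ $q''$ fitting $E$ has $q''\prec^{\mathrm{cod}}_q q'$. A $\preceq^{\mathrm{cod}}$-specialization for $(q,E)$ is a CQ $q'$ fitting $E$ with $q'\subseteq q$ such that no CQ $q''$ fitting $E$ with $q''\subseteq q$ has $q''\prec^{\mathrm{cod}}_q q'$. Candidate CQs use only relation symbols occurring in $q$ and $E$. *)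

From Stdlib Require Import List.
Import ListNotations.
Set Implicit Arguments.

Section CQs.
Variable S : Type.
Variable ar : S -> nat.

Definition fact := (S * list nat)%type.
Definition instance := list fact.
Definition example := (instance * list nat)%type.

Definition wf_instance (I : instance) : Prop :=
  forall R ts, In (R, ts) I -> length ts = ar R.

Definition adom (I : instance) (v : nat) : Prop :=
  exists R ts, In (R, ts) I /\ In v ts.

Definition wf_example (e : example) : Prop :=
  wf_instance (fst e) /\ forall v, In v (snd e) -> adom (fst e) v.

Record CQ := mkCQ { cq_ans : list nat; cq_atoms : list (S * list nat) }.

Definition wf_CQ (q : CQ) : Prop :=
  (forall R xs, In (R, xs) (cq_atoms q) -> length xs = ar R) /\
  (forall x, In x (cq_ans q) -> exists R xs, In (R, xs) (cq_atoms q) /\ In x xs).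

Definition arity (q : CQ) : nat := length (cq_ans q).

Definition answers (q : CQ) (I : instance) (a : list nat) : Prop :=
  exists h : nat -> nat,
    (forall R xs, In (R, xs) (cq_atoms q) -> In (R, map h xs) I) /\
    map h (cq_ans q) = a.

Definition denot (q : CQ) (e : example) : Prop :=
  wf_example e /\ length (snd e) = arity q /\ answers q (fst e) (snd e).

Definition contained (q1 q2 : CQ) : Prop :=
  forall e, denot q1 e -> denot q2 e.

Definition symdiff (q q1 : CQ) (e : example) : Prop :=
  (denot q e /\ ~ denot q1 e) \/ (~ denot q e /\ denot q1 e).

Definition cod_le (q q1 q2 : CQ) : Prop :=
  forall e, symdiff q q1 e -> symdiff q q2 e.

Definition cod_lt (q q1 q2 : CQ) : Prop :=
  cod_le q q1 q2 /\ ~ cod_le q q2 q1.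

Definition examples := (list example * list example)%type.

Definition fits (q : CQ) (E : examples) : Prop :=
  (forall e, In e (fst E) -> denot q e) /\
  (forall e, In e (snd E) -> ~ denot q e).

Definition sym_in_CQ (q : CQ) (R : S) : Prop :=
  exists xs, In (R, xs) (cq_atoms q).
Definition sym_in_examples (E : examples) (R : S) : Prop :=
  exists e ts, (In e (fst E) \/ In e (snd E)) /\ In (R, ts) (fst e).

Definition candidate (q : CQ) (E : examples) (q' : CQ) : Prop :=
  wf_CQ q' /\ arity q' = arity q /\
  forall R, sym_in_CQ q' R -> sym_in_CQ q R \/ sym_in_examples E R.

Definition cod_repair (q : CQ) (E : examples) (q' : CQ) : Prop :=
  candidate q E q' /\ fits q' E /\
  forall q'', candidate q E q'' -> fits q'' E -> ~ cod_lt q q'' q'.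

Definition cod_specialization (q : CQ) (E : examples) (q' : CQ) : Prop :=
  candidate q E q' /\ fits q' E /\ contained q' q /\
  forall q'', candidate q E q'' -> fits q'' E -> contained q'' q ->
              ~ cod_lt q q'' q'.

Definition annotated (q : CQ) (E : examples) : Prop :=
  wf_CQ q /\
  forall e, In e (fst E) \/ In e (snd E) ->
            wf_example e /\ length (snd e) = arity q.

End CQs.

(* If a repair q' for negative examples only were not contained in q, the
   conjunction of q and q' (answer variables identified position by position)
   would do better: its denotation is [[q]] ∩ [[q']], so it still rejects every
   negative example, it uses only symbols of q and q', and its symmetric
   difference with [[q]] is [[q]] \ [[q']], a proper part of [[q]] ⊕ [[q']].
   Hence every repair is contained in q, and its minimality among all fitting
   candidates implies minimality among those contained in q. *)

From Stdlib Require Import List Classical Arith.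
Import ListNotations.

Fixpoint unifier (ps : list (nat * nat)) : nat -> nat :=
  match ps with
  | [] => fun z => z
  | (u, v) :: ps' =>
      let s := unifier ps' in
      fun z => if Nat.eqb (s z) (s v) then s u else s z
  end.

Lemma unifier_identifies ps u v : In (u, v) ps -> unifier ps u = unifier ps v.
Proof.
  induction ps as [|[a b] ps IH]; simpl; intros H; [contradiction|].
  destruct H as [H|H].
  - injection H as -> ->. rewrite Nat.eqb_refl.
    destruct (Nat.eqb_spec (unifier ps u) (unifier ps v)); congruence.
  - now rewrite (IH H).
Qed.

Lemma unifier_most_general ps (h : nat -> nat) :
  (forall u v, In (u, v) ps -> h u = h v) -> forall z, h (unifier ps z) = h z.
Proof.
  induction ps as [|[a b] ps IH]; simpl; intros Hh z; [reflexivity|].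
  assert (IH' : forall z, h (unifier ps z) = h z) by (apply IH; auto).
  destruct (Nat.eqb_spec (unifier ps z) (unifier ps b)) as [E|E].
  - rewrite IH', (Hh a b (or_introl eq_refl)), <- (IH' b), <- E. apply IH'.
  - apply IH'.
Qed.

Lemma map_eq_of_combine {A B} (g : A -> B) xs ys : length xs = length ys ->
  (forall u v, In (u, v) (combine xs ys) -> g u = g v) -> map g xs = map g ys.
Proof.
  revert ys; induction xs as [|x xs IH]; destruct ys as [|y ys]; simpl;
    intros L H; try discriminate; auto.
  f_equal; auto.
Qed.

Lemma combine_of_map_eq {A B C} (f : A -> C) (g : B -> C) xs ys :
  map f xs = map g ys -> forall u v, In (u, v) (combine xs ys) -> f u = g v.
Proof.
  revert ys; induction xs as [|x xs IH]; destruct ys as [|y ys]; simpl;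
    intros E u v Hin; try contradiction.
  injection E as Exy Erest. destruct Hin as [Hin|Hin]; eauto.
  now injection Hin as <- <-.
Qed.

(* Variables of the two conjuncts are kept apart as even and odd numbers. *)
Definition left_var (x : nat) : nat := 2 * x.
Definition right_var (x : nat) : nat := S (2 * x).

Definition join_vals (h1 h2 : nat -> nat) (z : nat) : nat :=
  if Nat.even z then h1 (Nat.div2 z) else h2 (Nat.div2 z).

Lemma join_vals_left h1 h2 x : join_vals h1 h2 (left_var x) = h1 x.
Proof.
  unfold join_vals, left_var. now rewrite Nat.even_mul, Nat.div2_double.
Qed.

Lemma join_vals_right h1 h2 x : join_vals h1 h2 (right_var x) = h2 x.
Proof.
  unfold join_vals, right_var.
  now rewrite Nat.even_succ, Nat.odd_mul, Nat.div2_succ_double.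
Qed.

Section Conjunction.
Context {S : Type} (ar : S -> nat).

Definition rename_atoms (f : nat -> nat) (atoms : list (S * list nat)) :=
  map (fun p => (fst p, map f (snd p))) atoms.

Lemma in_rename_atoms f atoms R ys :
  In (R, ys) (rename_atoms f atoms) <->
  exists xs, ys = map f xs /\ In (R, xs) atoms.
Proof.
  unfold rename_atoms. rewrite in_map_iff. split.
  - intros [[R' xs] [E Hin]]. injection E as <- <-. eauto.
  - intros [xs [-> Hin]]. now exists (R, xs).
Qed.

Definition is_hom (h : nat -> nat) (atoms : list (S * list nat)) (I : instance S) :=
  forall R xs, In (R, xs) atoms -> In (R, map h xs) I.

Lemma is_hom_rename h f atoms I :
  is_hom h (rename_atoms f atoms) I <-> is_hom (fun x => h (f x)) atoms I.
Proof.
  split; intros H R xs Hin.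
  - rewrite <- map_map. apply H, in_rename_atoms. eauto.
  - apply in_rename_atoms in Hin as [ys [-> Hin]]. rewrite map_map. auto.
Qed.

Lemma is_hom_app h atoms1 atoms2 I :
  is_hom h (atoms1 ++ atoms2) I <-> is_hom h atoms1 I /\ is_hom h atoms2 I.
Proof.
  unfold is_hom. setoid_rewrite in_app_iff. firstorder.
Qed.

Lemma is_hom_ext h g atoms I :
  (forall x, h x = g x) -> is_hom h atoms I -> is_hom g atoms I.
Proof.
  intros E H R xs Hin. rewrite <- (map_ext _ _ E). auto.
Qed.

Definition conj_unifier (q q' : CQ S) : nat -> nat :=
  unifier (combine (map left_var (cq_ans q)) (map right_var (cq_ans q'))).

Definition cq_conj (q q' : CQ S) : CQ S :=
  let s := conj_unifier q q' in
  mkCQ (map s (map left_var (cq_ans q)))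
       (rename_atoms s (rename_atoms left_var (cq_atoms q) ++
                        rename_atoms right_var (cq_atoms q'))).

Lemma cq_conj_ans q q' : arity q = arity q' ->
  map (conj_unifier q q') (map left_var (cq_ans q)) =
  map (conj_unifier q q') (map right_var (cq_ans q')).
Proof.
  intro L. apply map_eq_of_combine.
  - unfold arity in L. now rewrite !length_map.
  - intros u v. apply unifier_identifies.
Qed.

Lemma answers_cq_conj q q' I a : arity q = arity q' ->
  answers (cq_conj q q') I a <-> answers q I a /\ answers q' I a.
Proof.
  intro L. unfold answers; simpl. split.
  - intros [h [Hom Ans]].
    apply is_hom_rename, is_hom_app in Hom as [Hom1 Hom2].
    rewrite is_hom_rename in Hom1, Hom2. split.
    + exists (fun x => h (conj_unifier q q' (left_var x))).
      split; [exact Hom1|]. now rewrite <- Ans, !map_map.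
    + exists (fun x => h (conj_unifier q q' (right_var x))).
      split; [exact Hom2|]. now rewrite <- Ans, cq_conj_ans, !map_map.
  - intros [[h1 [Hom1 Ans1]] [h2 [Hom2 Ans2]]].
    set (h := join_vals h1 h2).
    assert (Hleft : forall x, h1 x = h (left_var x))
      by (intro; symmetry; apply join_vals_left).
    assert (Hright : forall x, h2 x = h (right_var x))
      by (intro; symmetry; apply join_vals_right).
    assert (Hfix : forall z, h z = h (conj_unifier q q' z)).
    { intro z. symmetry. apply unifier_most_general.
      apply combine_of_map_eq. rewrite !map_map, <- !(map_ext _ _ Hleft),
        <- !(map_ext _ _ Hright). congruence. }
    exists h. split.
    + apply is_hom_rename, is_hom_app.
      split; apply is_hom_rename; eapply is_hom_ext;
        [| exact Hom1 | | exact Hom2]; intro x;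
        [rewrite Hleft | rewrite Hright]; apply Hfix.
    + rewrite <- Ans1, map_map, !(map_ext _ _ Hleft), map_map.
      apply map_ext. intro. symmetry. apply Hfix.
Qed.

Lemma arity_cq_conj q q' : arity (cq_conj q q') = arity q.
Proof. unfold arity. simpl. now rewrite !length_map. Qed.

Lemma denot_cq_conj q q' e : arity q = arity q' ->
  denot ar (cq_conj q q') e <-> denot ar q e /\ denot ar q' e.
Proof.
  intro L. unfold denot. rewrite arity_cq_conj, answers_cq_conj by exact L.
  rewrite <- L. tauto.
Qed.

Lemma wf_cq_conj q q' : wf_CQ ar q -> wf_CQ ar q' -> wf_CQ ar (cq_conj q q').
Proof.
  intros [Ar Safe] [Ar' _]. split; simpl.
  - intros R ys Hin.
    apply in_rename_atoms in Hin as [zs [-> Hin]]. rewrite length_map.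
    apply in_app_iff in Hin as [Hin|Hin];
      apply in_rename_atoms in Hin as [xs [-> Hin]]; rewrite length_map; eauto.
  - intros z Hz. apply in_map_iff in Hz as [y [<- Hy]].
    apply in_map_iff in Hy as [x [<- Hx]].
    destruct (Safe x Hx) as [R [xs [Hin Hxs]]].
    exists R, (map (conj_unifier q q') (map left_var xs)). split.
    + apply in_rename_atoms. eexists; split; [reflexivity|].
      apply in_app_iff. left. apply in_rename_atoms. eauto.
    + now apply in_map, in_map.
Qed.

Lemma sym_in_cq_conj q q' R :
  sym_in_CQ (cq_conj q q') R -> sym_in_CQ q R \/ sym_in_CQ q' R.
Proof.
  intros [ys Hin]. apply in_rename_atoms in Hin as [zs [_ Hin]].
  apply in_app_iff in Hin as [Hin|Hin];
    apply in_rename_atoms in Hin as [xs [_ Hin]]; [left|right]; now exists xs.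
Qed.

Lemma candidate_cq_conj q E q' :
  wf_CQ ar q -> candidate ar q E q' -> candidate ar q E (cq_conj q q').
Proof.
  intros Wq [Wq' [Ar Sym]]. split; [|split].
  - now apply wf_cq_conj.
  - apply arity_cq_conj.
  - intros R HR. apply sym_in_cq_conj in HR as [HR|HR]; auto.
Qed.

End Conjunction.

Lemma fits_negatives_contained {S} (ar : S -> nat) q q' (Eneg : list (example S)) :
  contained ar q q' -> fits ar q' ([], Eneg) -> fits ar q ([], Eneg).
Proof.
  intros C [_ Neg]. split; [simpl; tauto|]. intros e He D. exact (Neg e He (C e D)).
Qed.

Lemma cod_lt_of_meet {S} (ar : S -> nat) q q' m :
  (forall e, denot ar m e <-> denot ar q e /\ denot ar q' e) ->
  ~ contained ar q' q -> cod_lt ar q m q'.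
Proof.
  intros Meet NC. split.
  - intro e. specialize (Meet e). unfold symdiff. tauto.
  - intro Le. apply NC. intros e De. apply NNPP. intro Dq.
    specialize (Le e). specialize (Meet e). unfold symdiff in Le. tauto.
Qed.

Lemma cod_repair_negatives_contained {S} (ar : S -> nat) q (Eneg : list (example S)) q' :
  wf_CQ ar q -> cod_repair ar q ([], Eneg) q' -> contained ar q' q.
Proof.
  intros Wq [Cand [Fit Min]]. apply NNPP. intro NC.
  assert (L : arity q = arity q') by (symmetry; apply Cand).
  apply (Min (cq_conj q q')).
  - now apply candidate_cq_conj.
  - apply fits_negatives_contained with q'; [|exact Fit].
    intros e D. now apply denot_cq_conj in D.
  - apply cod_lt_of_meet; [|exact NC]. intro. now apply denot_cq_conj.
Qed.

Theorem proposition21 :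
  forall (S : Type) (ar : S -> nat) (q : CQ S) (Eneg : list (example S)),
    annotated ar q ([], Eneg) ->
    forall q' : CQ S,
      cod_repair ar q ([], Eneg) q' ->
      cod_specialization ar q ([], Eneg) q'.
Proof.
  intros S ar q Eneg [Wq _] q' Rep.
  pose proof (cod_repair_negatives_contained ar q Eneg q' Wq Rep) as Cont.
  destruct Rep as [Cand [Fit Min]].
  split; [exact Cand|split; [exact Fit|split; [exact Cont|]]].
  intros q'' C F _. now apply Min.
Qed.
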